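(* Let $p>1$ and $x\in(0,1)$. Then $$\arcsin_p\left(\frac{x}{\sqrt[p]{1+x^p}}\right)=\arctan_p(x),\qquad \arcsin_p(x)=\arctan_p\left(\frac{x}{\sqrt[p]{1-x^p}}\right),$$ $$\arccos_p(x)=\arctan_p\left(\frac{\sqrt[p]{1-x^p}}{x}\right),\qquad \arccos_p\left(\frac{1}{\sqrt[p]{1+x^p}}\right)=\arctan_p(x).$$
   Context: For $p>1$: $\arcsin_p y=\int_0^y(1-t^p)^{-1/p}dt$ for $y\in(0,1)$; $\arccos_p y=\arcsin_p\bigl((1-y^p)^{1/p}\bigr)$ for $y\in(0,1)$; $\arctan_p y=\int_0^y(1+t^p)^{-1}dt$ for $y\ge0$. *)

From Stdlib Require Import Reals.
From Coquelicot Require Import Coquelicot.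
Open Scope R_scope.

(* Real power x^a: exp(a ln x) for x > 0, and 0 for x <= 0
   (only ever evaluated at x >= 0 here; gives 0^a = 0 for a > 0). *)
Definition rpow (x a : R) : R :=
  if Rlt_dec 0 x then Rpower x a else 0.

Definition arcsin_p (p y : R) : R :=
  RInt (fun t => rpow (1 - rpow t p) (- / p)) 0 y.

Definition arccos_p (p y : R) : R :=
  arcsin_p p (rpow (1 - rpow y p) (/ p)).

Definition arctan_p (p y : R) : R :=
  RInt (fun t => / (1 + rpow t p)) 0 y.

(* With U = 1 + x^p, the map x |-> x / U^(1/p) has derivative 1 / (U U^(1/p)),
   and the arcsin_p integrand at x / U^(1/p) is (1/U)^(-1/p) = U^(1/p); so
   x |-> arcsin_p (x / U^(1/p)) has the derivative 1/U of arctan_p, and both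
   vanish at 0.  The other three identities reduce to this one because
   y = x / (1 - x^p)^(1/p) satisfies y / (1 + y^p)^(1/p) = x, and because
   t |-> (1 - t^p)^(1/p) is an involution of (0, 1) exchanging
   x / (1 + x^p)^(1/p) and 1 / (1 + x^p)^(1/p). *)
From Stdlib Require Import Reals Lra.
From Coquelicot Require Import Coquelicot.
Open Scope R_scope.

Lemma rpow_Rpower x a : 0 < x -> rpow x a = Rpower x a.
Proof. intro hx; unfold rpow; destruct (Rlt_dec 0 x); [reflexivity|lra]. Qed.

Lemma rpow_nonpos x a : x <= 0 -> rpow x a = 0.
Proof. intro hx; unfold rpow; destruct (Rlt_dec 0 x); [lra|reflexivity]. Qed.

Lemma rpow_gt0 x a : 0 < x -> 0 < rpow x a.
Proof. intro hx; rewrite rpow_Rpower by exact hx; apply exp_pos. Qed.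

Lemma rpow_ge0 x a : 0 <= rpow x a.
Proof.
  destruct (Rlt_dec 0 x) as [hx|hx].
  - apply Rlt_le, rpow_gt0, hx.
  - rewrite rpow_nonpos by lra; lra.
Qed.

Lemma rpow_1 a : rpow 1 a = 1.
Proof. rewrite rpow_Rpower by lra; unfold Rpower; rewrite ln_1, Rmult_0_r; apply exp_0. Qed.

Lemma rpow_mul x a b : 0 < x -> rpow (rpow x a) b = rpow x (a * b).
Proof.
  intro hx; rewrite !rpow_Rpower by (try apply rpow_gt0; exact hx).
  apply Rpower_mult.
Qed.

Lemma rpow_inv_r x p : 0 < x -> p <> 0 -> rpow (rpow x p) (/ p) = x.
Proof.
  intros hx hp; rewrite rpow_mul, Rinv_r, rpow_Rpower by assumption.
  apply Rpower_1, hx.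
Qed.

Lemma rpow_inv_l x p : 0 < x -> p <> 0 -> rpow (rpow x (/ p)) p = x.
Proof.
  intros hx hp; rewrite rpow_mul, Rinv_l, rpow_Rpower by assumption.
  apply Rpower_1, hx.
Qed.

Lemma rpow_div x y a : 0 < x -> 0 < y -> rpow (x / y) a = rpow x a / rpow y a.
Proof.
  intros hx hy.
  rewrite !rpow_Rpower by (try apply Rdiv_lt_0_compat; assumption).
  unfold Rdiv; rewrite <- Rpower_mult_distr, <- Rpower_Ropp
    by (try apply Rinv_0_lt_compat; assumption).
  unfold Rpower; rewrite ln_Rinv by exact hy; do 2 f_equal; ring.
Qed.

Lemma rpow_inv x a : 0 < x -> rpow (/ x) a = / rpow x a.
Proof.
  intro hx; rewrite <- (Rmult_1_l (/ x)); fold (1 / x).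
  rewrite rpow_div, rpow_1 by lra; apply Rmult_1_l.
Qed.

Lemma rpow_opp x a : 0 < x -> rpow x (- a) = / rpow x a.
Proof. intro hx; rewrite !rpow_Rpower by exact hx; apply Rpower_Ropp. Qed.

Lemma rpow_lt_rpow x y a : 0 < a -> 0 < x < y -> rpow x a < rpow y a.
Proof. intros ha hxy; rewrite !rpow_Rpower by lra; apply Rlt_Rpower_l; assumption. Qed.

Lemma rpow_lt_1 x p : 0 < p -> x < 1 -> rpow x p < 1.
Proof.
  intros hp hx; destruct (Rlt_dec 0 x) as [hx0|hx0].
  - rewrite <- (rpow_1 p); apply rpow_lt_rpow; lra.
  - rewrite rpow_nonpos by lra; lra.
Qed.

Lemma is_derive_rpow x a : 0 < x ->
  is_derive (fun t => rpow t a) x (a * rpow x a / x).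
Proof.
  intro hx.
  apply is_derive_ext_loc with (f := fun t => Rpower t a).
  - apply (locally_interval _ x 0 p_infty); [exact hx|exact I|].
    intros y hy _; symmetry; apply rpow_Rpower, hy.
  - replace (a * rpow x a / x) with (a * Rpower x (a - 1)).
    + apply is_derive_Reals, derivable_pt_lim_power, hx.
    + unfold Rminus; rewrite Rpower_plus, Rpower_Ropp, Rpower_1, rpow_Rpower by exact hx.
      field; lra.
Qed.

Lemma continuous_rpow_pos x a : 0 < x -> continuous (fun t => rpow t a) x.
Proof.
  intro hx; apply (ex_derive_continuous (K := R_AbsRing) (V := R_NormedModule)).
  eexists; apply is_derive_rpow, hx.
Qed.

Lemma continuous_rpow_at_0 p : 0 < p -> continuous (fun t => rpow t p) 0.
Proof.
  intro hp; apply continuity_pt_filterlim; intros eps heps.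
  exists (rpow eps (/ p)); split; [apply rpow_gt0, heps|].
  intros y [_ hy]; simpl in *; unfold R_dist in *.
  rewrite (rpow_nonpos 0), Rminus_0_r in * by lra.
  destruct (Rlt_dec 0 y) as [hy0|hy0].
  - rewrite Rabs_pos_eq in * by (try apply rpow_ge0; lra).
    rewrite <- (rpow_inv_l eps p) by lra; apply rpow_lt_rpow; lra.
  - rewrite rpow_nonpos, Rabs_R0 by lra; exact heps.
Qed.

Lemma continuous_rpow x p : 0 < p -> continuous (fun t => rpow t p) x.
Proof.
  intro hp; destruct (Rtotal_order x 0) as [hx|[->|hx]].
  - apply continuous_ext_loc with (g := fun _ => 0); [|apply continuous_const].
    apply (locally_interval _ x m_infty 0); [exact I|exact hx|].
    intros y _ hy; symmetry; apply rpow_nonpos; simpl in hy; lra.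
  - apply continuous_rpow_at_0, hp.
  - apply continuous_rpow_pos, hx.
Qed.

Lemma continuous_arcsin_integrand p t : 0 < p -> t < 1 ->
  continuous (fun s => rpow (1 - rpow s p) (- / p)) t.
Proof.
  intros hp ht.
  apply (continuous_comp (fun s => 1 - rpow s p) (fun u => rpow u (- / p))).
  - apply (continuous_minus (fun _ => 1) (fun s => rpow s p));
      [apply continuous_const|apply continuous_rpow, hp].
  - apply continuous_rpow_pos; pose proof (rpow_lt_1 t p hp ht); lra.
Qed.

Lemma continuous_arctan_integrand p t : 0 < p ->
  continuous (fun s => / (1 + rpow s p)) t.
Proof.
  intro hp; apply (continuous_Rinv_comp (fun s => 1 + rpow s p)).
  - apply (continuous_plus (fun _ => 1) (fun s => rpow s p));
      [apply continuous_const|apply continuous_rpow, hp].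
  - pose proof (rpow_ge0 t p); lra.
Qed.

Lemma is_derive_arcsin_p p y : 0 < p -> y < 1 ->
  is_derive (arcsin_p p) y (rpow (1 - rpow y p) (- / p)).
Proof.
  intros hp hy; apply (is_derive_RInt (fun s => rpow (1 - rpow s p) (- / p)) (arcsin_p p) 0);
    [|apply continuous_arcsin_integrand; assumption].
  apply (locally_interval _ y m_infty 1); [exact I|exact hy|].
  intros b _ hb; apply (RInt_correct (fun s => rpow (1 - rpow s p) (- / p))), ex_RInt_continuous; intros z hz.
  apply continuous_arcsin_integrand; [exact hp|].
  pose proof (Rmax_lub_lt 0 b 1 ltac:(lra) hb); lra.
Qed.

Lemma is_derive_arctan_p p y : 0 < p ->
  is_derive (arctan_p p) y (/ (1 + rpow y p)).
Proof.
  intro hp; apply (is_derive_RInt (fun s => / (1 + rpow s p)) (arctan_p p) 0);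
    [|apply continuous_arctan_integrand, hp].
  apply filter_forall; intro b; apply (RInt_correct (fun s => / (1 + rpow s p))), ex_RInt_continuous.
  intros z _; apply continuous_arctan_integrand, hp.
Qed.

Definition sin_arctan_p (p x : R) : R := x / rpow (1 + rpow x p) (/ p).

Lemma sin_arctan_p_lt_1 p x : 0 < p -> sin_arctan_p p x < 1.
Proof.
  intro hp; unfold sin_arctan_p.
  assert (hU : 0 < 1 + rpow x p) by (pose proof (rpow_ge0 x p); lra).
  pose proof (rpow_gt0 _ (/ p) hU) as hV.
  apply Rlt_div_l; [exact hV|rewrite Rmult_1_l].
  destruct (Rlt_dec 0 x) as [hx|hx]; [|lra].
  rewrite <- (rpow_inv_r x p) at 1 by lra.
  apply rpow_lt_rpow; [apply Rinv_0_lt_compat, hp|].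
  pose proof (rpow_gt0 x p hx); lra.
Qed.

Lemma rpow_sin_arctan_p p x : 0 < p -> 0 < x ->
  rpow (sin_arctan_p p x) p = rpow x p / (1 + rpow x p).
Proof.
  intros hp hx; unfold sin_arctan_p.
  assert (hU : 0 < 1 + rpow x p) by (pose proof (rpow_ge0 x p); lra).
  rewrite rpow_div, rpow_inv_l by (try apply rpow_gt0; lra); reflexivity.
Qed.

Lemma continuous_sin_arctan_p p x : 0 < p -> continuous (sin_arctan_p p) x.
Proof.
  intro hp; unfold sin_arctan_p.
  assert (hU : 0 < 1 + rpow x p) by (pose proof (rpow_ge0 x p); lra).
  apply (continuous_mult (fun s => s) (fun s => / rpow (1 + rpow s p) (/ p)));
    [apply continuous_id|].
  apply (continuous_Rinv_comp (fun s => rpow (1 + rpow s p) (/ p)));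
    [|apply Rgt_not_eq, rpow_gt0, hU].
  apply (continuous_comp (fun s => 1 + rpow s p) (fun u => rpow u (/ p)));
    [|apply continuous_rpow_pos, hU].
  apply (continuous_plus (fun _ => 1) (fun s => rpow s p));
    [apply continuous_const|apply continuous_rpow, hp].
Qed.

Lemma is_derive_sin_arctan_p p x : 0 < p -> 0 < x ->
  is_derive (sin_arctan_p p) x
    (/ ((1 + rpow x p) * rpow (1 + rpow x p) (/ p))).
Proof.
  intros hp hx.
  set (U := 1 + rpow x p).
  assert (hA : 0 < rpow x p) by (apply rpow_gt0, hx).
  assert (hU : 0 < U) by (unfold U; lra).
  assert (hV : 0 < rpow U (/ p)) by (apply rpow_gt0, hU).
  assert (hU' : is_derive (fun s => 1 + rpow s p) x (p * rpow x p / x)).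
  { pose proof (is_derive_plus (fun _ => 1) (fun s => rpow s p) x _ _
                  (is_derive_const 1 x) (is_derive_rpow x p hx)) as h.
    unfold plus, zero in h; simpl in h; rewrite Rplus_0_l in h; exact h. }
  assert (hV' : is_derive (fun s => rpow (1 + rpow s p) (/ p)) x
                (p * rpow x p / x * (/ p * rpow U (/ p) / U))).
  { apply (is_derive_comp (fun u => rpow u (/ p)) (fun s => 1 + rpow s p)); [apply is_derive_rpow, hU|exact hU']. }
  replace (/ (U * rpow U (/ p)))
    with ((1 * rpow U (/ p) - x * (p * rpow x p / x * (/ p * rpow U (/ p) / U)))
            / rpow U (/ p) ^ 2)
    by (unfold U in *; field; repeat split; lra).
  apply (is_derive_div (fun s => s) (fun s => rpow (1 + rpow s p) (/ p)));
    [exact (is_derive_id x)|exact hV'|apply Rgt_not_eq, hV].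
Qed.

Lemma is_derive_arcsin_p_sin_arctan_p p x : 0 < p -> 0 < x ->
  is_derive (fun s => arcsin_p p (sin_arctan_p p s)) x (/ (1 + rpow x p)).
Proof.
  intros hp hx.
  set (U := 1 + rpow x p).
  assert (hU : 0 < U) by (pose proof (rpow_gt0 x p hx); unfold U; lra).
  assert (hV : 0 < rpow U (/ p)) by (apply rpow_gt0, hU).
  assert (hsin : rpow (1 - rpow (sin_arctan_p p x) p) (- / p) = rpow U (/ p)).
  { rewrite rpow_sin_arctan_p by assumption; fold U.
    replace (1 - rpow x p / U) with (/ U) by (unfold U in *; field; lra).
    rewrite rpow_opp, rpow_inv, Rinv_inv by (apply Rinv_0_lt_compat + idtac; lra).
    reflexivity. }
  replace (/ U)
    with (/ (U * rpow U (/ p)) * rpow (1 - rpow (sin_arctan_p p x) p) (- / p))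
    by (rewrite hsin; field; lra).
  apply (is_derive_comp (arcsin_p p) (sin_arctan_p p)).
  - apply is_derive_arcsin_p, sin_arctan_p_lt_1; exact hp.
  - apply is_derive_sin_arctan_p; assumption.
Qed.

Lemma arcsin_p_sin_arctan_p p x : 0 < p -> 0 <= x ->
  arcsin_p p (sin_arctan_p p x) = arctan_p p x.
Proof.
  intros hp hx.
  set (D := fun s => arcsin_p p (sin_arctan_p p s) - arctan_p p s).
  assert (hD0 : D 0 = 0).
  { unfold D, sin_arctan_p, arcsin_p, arctan_p; unfold Rdiv; rewrite Rmult_0_l, !RInt_point.
    unfold zero; simpl; ring. }
  destruct (Req_dec x 0) as [->|hx0]; [unfold D in hD0; lra|].
  destruct (MVT_gen D 0 x (fun _ => 0)) as [c [_ hc]].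
  - rewrite Rmin_left, Rmax_right by lra; intros y hy.
    replace 0 with (minus (/ (1 + rpow y p)) (/ (1 + rpow y p)))
      by (unfold minus, plus, opp; simpl; ring).
    apply (is_derive_minus (fun s => arcsin_p p (sin_arctan_p p s)) (arctan_p p));
      [apply is_derive_arcsin_p_sin_arctan_p|apply is_derive_arctan_p]; lra.
  - intros y _; apply continuity_pt_filterlim.
    apply (continuous_minus (fun s => arcsin_p p (sin_arctan_p p s)) (arctan_p p)).
    + apply (continuous_comp (sin_arctan_p p) (arcsin_p p));
        [apply continuous_sin_arctan_p, hp|].
      apply (ex_derive_continuous (K := R_AbsRing) (V := R_NormedModule)); eexists.
      apply is_derive_arcsin_p, sin_arctan_p_lt_1; exact hp.
    + apply (ex_derive_continuous (K := R_AbsRing) (V := R_NormedModule)); eexists.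
      apply is_derive_arctan_p, hp.
  - unfold D in hc, hD0; lra.
Qed.

Lemma sin_arctan_p_tan_arcsin_p p x : 0 < p -> 0 < x < 1 ->
  sin_arctan_p p (x / rpow (1 - rpow x p) (/ p)) = x.
Proof.
  intros hp hx.
  assert (hA : 0 < rpow x p < 1) by (split; [apply rpow_gt0|apply rpow_lt_1]; lra).
  assert (hW : 0 < rpow (1 - rpow x p) (/ p)) by (apply rpow_gt0; lra).
  unfold sin_arctan_p.
  rewrite rpow_div, rpow_inv_l by lra.
  replace (1 + rpow x p / (1 - rpow x p)) with (/ (1 - rpow x p)) by (field; lra).
  rewrite rpow_inv by lra; field; lra.
Qed.

Lemma arcsin_p_eq_arctan_p p x : 0 < p -> 0 < x < 1 ->
  arcsin_p p x = arctan_p p (x / rpow (1 - rpow x p) (/ p)).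
Proof.
  intros hp hx.
  assert (hW : 0 < rpow (1 - rpow x p) (/ p))
    by (apply rpow_gt0; pose proof (rpow_lt_1 x p hp ltac:(lra)); lra).
  rewrite <- arcsin_p_sin_arctan_p, sin_arctan_p_tan_arcsin_p by (try apply Rlt_le, Rdiv_lt_0_compat; lra).
  reflexivity.
Qed.

Lemma arccos_p_eq_arctan_p p x : 0 < p -> 0 < x < 1 ->
  arccos_p p x = arctan_p p (rpow (1 - rpow x p) (/ p) / x).
Proof.
  intros hp hx.
  assert (hA : 0 < rpow x p < 1) by (split; [apply rpow_gt0|apply rpow_lt_1]; lra).
  assert (hWp : rpow (rpow (1 - rpow x p) (/ p)) p = 1 - rpow x p)
    by (apply rpow_inv_l; lra).
  unfold arccos_p; rewrite arcsin_p_eq_arctan_p, hWp.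
  - replace (1 - (1 - rpow x p)) with (rpow x p) by ring.
    rewrite rpow_inv_r by lra; reflexivity.
  - exact hp.
  - split; [apply rpow_gt0; lra|].
    rewrite <- (rpow_1 (/ p)) at 2; apply rpow_lt_rpow; [apply Rinv_0_lt_compat|]; lra.
Qed.

Lemma arccos_p_cos_arctan_p p x : 0 < p -> 0 < x ->
  arccos_p p (1 / rpow (1 + rpow x p) (/ p)) = arctan_p p x.
Proof.
  intros hp hx.
  assert (hA : 0 < rpow x p) by (apply rpow_gt0, hx).
  assert (hV : 0 < rpow (1 + rpow x p) (/ p)) by (apply rpow_gt0; lra).
  assert (hS : 0 < sin_arctan_p p x) by (apply Rdiv_lt_0_compat; lra).
  unfold arccos_p; rewrite <- arcsin_p_sin_arctan_p by lra; f_equal.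
  rewrite rpow_div, rpow_1, rpow_inv_l by lra.
  replace (1 - 1 / (1 + rpow x p)) with (rpow x p / (1 + rpow x p)) by (field; lra).
  rewrite <- rpow_sin_arctan_p, rpow_inv_r by lra; reflexivity.
Qed.

Theorem lemma3p7 (p x : R) (hp : 1 < p) (hx : 0 < x < 1) :
  arcsin_p p (x / rpow (1 + rpow x p) (/ p)) = arctan_p p x /\
  arcsin_p p x = arctan_p p (x / rpow (1 - rpow x p) (/ p)) /\
  arccos_p p x = arctan_p p (rpow (1 - rpow x p) (/ p) / x) /\
  arccos_p p (1 / rpow (1 + rpow x p) (/ p)) = arctan_p p x.
Proof.
  assert (hp0 : 0 < p) by lra.
  repeat split.
  - apply (arcsin_p_sin_arctan_p p x hp0); lra.
  - apply arcsin_p_eq_arctan_p; assumption.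
  - apply arccos_p_eq_arctan_p; assumption.
  - apply arccos_p_cos_arctan_p; [exact hp0|lra].
Qed.
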